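(* Let $f:\mathbb{N}^k\to\mathbb{N}$ with $k\ge1$. The following are equivalent: (a) $f\notin\mathscr{C}_{I_{\bar d=0}}$; (b) some shadow of $f$ is minimal; (c) some shadow of $f$ is bad; (d) some shadow of $f$ is not in $\mathscr{C}_{I_{\bar d=0}}$.
   Context: $\mathbb{N}=\{0,1,2,\dots\}$. For $A\subseteq\mathbb{N}$, $\bar d(A)=\limsup_{n\to\infty}\frac{|A\cap[0,n)|}{n}$. $\mathscr{C}_{I_{\bar d=0}}$ is the set of all finitary functions $f:\mathbb{N}^k\to\mathbb{N}$ ($k\ge1$) such that $\bar d(f[A^k])=0$ whenever $\bar d(A)=0$. For $f:\mathbb{N}^k\to\mathbb{N}$, a permutation $\pi$ of $\{1,\dots,k\}$ and $\bar a=(a_1,\dots,a_\ell)\in\mathbb{N}^\ell$ with $0\le\ell<k$, the shadow $f_{\pi,\bar a}$ is the $(k-\ell)$-ary function $(y_1,\dots,y_{k-\ell})\mapsto f_\pi(a_1,\dots,a_\ell,y_1,\dots,y_{k-\ell})$, where $f_\pi(x_1,\dots,x_k)=f(x_{\pi(1)},\dots,x_{\pi(k)})$. The shadows with $\ell>0$ are proper; those with $\ell=0$ (the functions $f_\pi$, including $f$ itself) are improper; ''shadow'' means proper or improper shadow. $f$ is minimal if $f\notin\mathscr{C}_{I_{\bar d=0}}$ and every proper shadow of $f$ lies in $\mathscr{C}_{I_{\bar d=0}}$. $f$ is bad if there exists a rational $\varepsilon>0$ such that for every $i\in\mathbb{N}$ there are $n,t\ge i$ and $A\subseteq[i,n)$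 with $|A\cap[0,r)|\le\frac{r}{2^i}$ for all $r\in\mathbb{N}$ and $|f[A^k]\cap[0,t)|\ge\varepsilon t$. *)

From HB Require Import structures.
From mathcomp Require Import all_boot all_order all_algebra all_fingroup.
From mathcomp Require Import all_classical all_reals.
From mathcomp Require Import topology normedtype sequences Rstruct.
Set Implicit Arguments. Unset Strict Implicit. Unset Printing Implicit Defensive.
Import Order.TTheory GRing.Theory Num.Theory.
Local Open Scope classical_set_scope.
Local Open Scope ring_scope.

Definition cnt (A : set nat) (n : nat) : nat := (\sum_(i < n) (`[< A i >] : nat))%N.

Definition dbar (A : set nat) : \bar Rdefinitions.R :=
  limn_esup (fun n => ((cnt A n)%:R / n%:R : Rdefinitions.R)%:E).

Definition fimage (k : nat) (f : k.-tuple nat -> nat) (A : set nat) : set nat :=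
  [set m | exists x : k.-tuple nat, (forall i : 'I_k, A (tnth x i)) /\ f x = m].

Definition inC (k : nat) (f : k.-tuple nat -> nat) : Prop :=
  (0 < k)%N /\ forall A : set nat, dbar A = 0%E -> dbar (fimage f A) = 0%E.

Definition fperm (k : nat) (f : k.-tuple nat -> nat) (pi : 'S_k) : k.-tuple nat -> nat :=
  fun x => f [tuple tnth x (pi i) | i < k].

Definition shadow (k : nat) (f : k.-tuple nat -> nat) (pi : 'S_k) (l : nat)
  (a : l.-tuple nat) : (k - l).-tuple nat -> nat :=
  fun y => fperm f pi [tuple nth 0%N (a ++ y) i | i < k].

(* some shadow (proper or improper, i.e. 0 <= l < k) of f satisfies P *)
Definition some_shadow (P : forall n : nat, (n.-tuple nat -> nat) -> Prop)
  (k : nat) (f : k.-tuple nat -> nat) : Prop :=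
  exists (l : nat) (pi : 'S_k) (a : l.-tuple nat), (l < k)%N /\ P (k - l)%N (shadow f pi a).

Definition minimal (k : nat) (f : k.-tuple nat -> nat) : Prop :=
  ~ inC f /\
  forall (l : nat) (pi : 'S_k) (a : l.-tuple nat), (0 < l < k)%N -> inC (shadow f pi a).

Definition bad (k : nat) (f : k.-tuple nat -> nat) : Prop :=
  exists eps : rat, 0 < eps /\
  forall i : nat, exists (n t : nat) (A : set nat),
    [/\ (i <= n)%N, (i <= t)%N,
        (forall x, A x -> (i <= x < n)%N),
        (forall r : nat, (cnt A r)%:R <= r%:R / (2 ^ i)%:R :> rat) &
        eps * t%:R <= (cnt (fimage f A) t)%:R].

From mathcomp Require Import all_boot all_order all_algebra all_fingroup.
From mathcomp Require Import all_classical all_reals.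
From mathcomp Require Import ereal topology normedtype sequences Rstruct zify.
Set Implicit Arguments. Unset Strict Implicit. Unset Printing Implicit Defensive.
Import Order.TTheory GRing.Theory Num.Theory.
Local Open Scope classical_set_scope.

(* [dbar A = 0] is equivalent to the combinatorial [zero_density A], which is
   closed under subsets and finite unions and holds for finite sets.  A shadow
   of a function in C is in C, since fixing coordinates only adds finitely many
   points to A; and shadows of shadows are shadows, so if f is not in C, a
   shadow that fixes as many coordinates as possible while leaving C is
   minimal.  A minimal g with g[A^k] of positive upper density is bad: the
   values g x with a coordinate below M lie in proper shadows, hence form a
   set of density zero, so the part of A above M (where A is sparse to order
   2^-i) already carries that density, and a finite block of it suffices.
   Conversely, if g is bad then the union of its witness blocks A_i has density
   zero by a geometric bound, while its image has upper density at least eps,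
   so g is not in C. *)

Definition zero_density (A : set nat) : Prop := forall m : nat, exists N : nat,
  forall n : nat, (N <= n)%N -> (m.+1 * cnt A n <= n)%N.

Section UpperDensity.
Local Open Scope ring_scope.

Let ratio (A : set nat) (n : nat) : \bar Rdefinitions.R :=
  ((cnt A n)%:R / n%:R)%:E.

Lemma dbarE (A : set nat) : dbar A = ereal_inf (range (esups (ratio A))).
Proof. by rewrite /dbar limn_esup_lim; apply: cvg_lim => //; exact: cvg_esups_inf. Qed.

Lemma dbar_eq0P (A : set nat) : dbar A = 0%E <-> zero_density A.
Proof.
rewrite dbarE; split.
- move=> dA0 m.
  have : (ereal_inf (range (esups (ratio A))) < (m.+1%:R^-1)%:E)%E.
    by rewrite dA0 lte_fin invr_gt0 ltr0n.
  move=> /ereal_inf_lt [_ [N _ <-]] supN; exists N => -[|n] Nn.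
    by rewrite /cnt big_ord0 muln0.
  have : (ratio A n.+1 < (m.+1%:R^-1)%:E)%E.
    by apply: le_lt_trans supN; apply: ereal_sup_ubound; exists n.+1.
  rewrite lte_fin ltr_pdivrMr ?ltr0n // mulrC ltr_pdivlMr ?ltr0n // => lt_n.
  by apply/ltnW; rewrite -(ltr_nat Rdefinitions.R) natrM mulrC.
- move=> dA; apply/eqP; rewrite eq_le; apply/andP; split; last first.
    apply: le_ereal_inf_tmp => _ [n _ <-]; apply: (@le_trans _ _ (ratio A n)).
      by rewrite lee_fin divr_ge0.
    by apply: ereal_sup_ubound; exists n => /=.
  apply/lee_addgt0Pr => e e0; rewrite add0e.
  have [N dAN] := dA (Num.truncn e^-1).
  apply: le_trans (_ : esups (ratio A) N <= e%:E)%E; first by apply: ereal_inf_lbound; exists N.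
  apply: ge_ereal_sup => _ [[|n] /= Nn <-].
    by rewrite lee_fin /cnt big_ord0 mul0r ltW.
  have le_cnt := dAN _ Nn; set t := Num.truncn e^-1 in le_cnt.
  have e_t : 1 <= e * t.+1%:R.
    by rewrite -[leLHS](mulfV (lt0r_neq0 e0)) ler_wpM2l ?ltW ?truncnS_gt.
  rewrite lee_fin ler_pdivrMr ?ltr0n //.
  apply: le_trans (ler_wpM2l (ltW e0) (_ : (t.+1 * cnt A n.+1)%:R <= n.+1%:R)); last first.
    by rewrite ler_nat.
  by rewrite natrM mulrA -[X in X <= _]mul1r ler_wpM2r.
Qed.

End UpperDensity.

Lemma cnt0 (A : set nat) : cnt A 0 = 0%N.
Proof. by rewrite /cnt big_ord0. Qed.

Lemma cntS (A : set nat) n : cnt A n.+1 = (cnt A n + `[< A n >])%N.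
Proof. by rewrite /cnt big_ord_recr. Qed.

Lemma cnt_set0 n : cnt set0 n = 0%N.
Proof. by rewrite /cnt big1 // => i _; rewrite asboolF. Qed.

Lemma cnt_subU (A B C : set nat) n :
  (forall v, (v < n)%N -> A v -> B v \/ C v) -> (cnt A n <= cnt B n + cnt C n)%N.
Proof.
elim: n => [|n IHn] sABC; first by rewrite !cnt0.
rewrite !cntS; have := IHn (fun v vn => sABC v (ltnW vn)).
case: (asboolP (A n)) => [/(sABC n (ltnSn n)) [Bn | Cn] | _] /=; last by lia.
  by rewrite (asboolT Bn); lia.
by rewrite (asboolT Cn); lia.
Qed.

Lemma cnt_sub (A B : set nat) n :
  (forall v, (v < n)%N -> A v -> B v) -> (cnt A n <= cnt B n)%N.
Proof.
move=> sAB; have := @cnt_subU A B set0 n (fun v vn Av => or_introl (sAB v vn Av)).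
by rewrite cnt_set0 addn0.
Qed.

Lemma cnt_bigcup (I : eqType) (s : seq I) (F : I -> set nat) n :
  (cnt [set v | exists2 i, i \in s & F i v] n <= \sum_(i <- s) cnt (F i) n)%N.
Proof.
elim: s => [|i s IHs].
  by rewrite big_nil -(cnt_set0 n); apply: cnt_sub => v _ [].
rewrite big_cons; apply: leq_trans (leq_add (leqnn _) IHs); apply: cnt_subU.
by move=> v _ [j]; rewrite in_cons => /orP [/eqP -> | js] Fv; [left | right; exists j].
Qed.

Lemma cnt_bounded (A : set nat) X n : (forall v, A v -> (v < X)%N) -> (cnt A n <= X)%N.
Proof.
move=> AX; suff : (cnt A n <= minn n X)%N by move/leq_trans; apply; exact: geq_minr.
elim: n => [|n IHn]; first by rewrite cnt0.
by rewrite cntS; case: (asboolP (A n)) => [/AX|] /=; lia.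
Qed.

Lemma zero_density_bounded (A : set nat) X :
  (forall v, A v -> (v < X)%N) -> zero_density A.
Proof.
move=> AX m; exists (m.+1 * X)%N => n; apply: leq_trans.
by rewrite leq_mul2l (cnt_bounded _ AX) orbT.
Qed.

Lemma zero_densityU (A B C : set nat) : zero_density B -> zero_density C ->
  (forall v, A v -> B v \/ C v) -> zero_density A.
Proof.
move=> dB dC sABC m.
have [NB dBN] := dB m.*2.+1; have [NC dCN] := dC m.*2.+1.
exists (maxn NB NC) => n; rewrite geq_max => /andP [NBn NCn].
have := dBN n NBn; have := dCN n NCn; have := cnt_subU (n := n) (fun v _ => sABC v).
nia.
Qed.

Lemma zero_density_sub (A B : set nat) :
  zero_density B -> (forall v, A v -> B v) -> zero_density A.
Proof. by move=> dB sAB; apply: (zero_densityU dB dB) => v /sAB; left. Qed.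

Lemma zero_density_bigcup (I : eqType) (s : seq I) (F : I -> set nat) :
  (forall i, i \in s -> zero_density (F i)) ->
  zero_density [set v | exists2 i, i \in s & F i v].
Proof.
elim: s => [|i s IHs] dF; first by apply: (@zero_density_bounded _ 0) => v [].
have dFi := dF i (mem_head _ _).
have dFs := IHs (fun j js => dF j (mem_behead (s := i :: s) js)).
apply: (zero_densityU dFi dFs) => v [j].
by rewrite in_cons => /orP [/eqP -> | js] Fv; [left | right; exists j].
Qed.

Lemma not_zero_density (A : set nat) : ~ zero_density A ->
  exists m, forall N, exists2 t, (N <= t)%N & (t < m.+1 * cnt A t)%N.
Proof.
move=> ndA; apply: contra_notP ndA => ndA m.
apply: contra_notP ndA => ndA; exists m => N.
apply: contra_notP ndA => ndA; exists N => n Nn.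
by rewrite leqNgt; apply/negP => ltn; apply: ndA; exists n.
Qed.

Lemma inCE k (f : k.-tuple nat -> nat) :
  inC f <-> (0 < k)%N /\ forall A, zero_density A -> zero_density (fimage f A).
Proof.
split=> -[k0 Cf]; split=> // A.
  by move=> /dbar_eq0P /Cf /dbar_eq0P.
by move=> /dbar_eq0P /Cf /dbar_eq0P.
Qed.

Lemma fimage_sub n (g : n.-tuple nat -> nat) (A B : set nat) :
  (forall x, A x -> B x) -> forall v, fimage g A v -> fimage g B v.
Proof. by move=> sAB v [x [Ax <-]]; exists x; split=> // i; apply: sAB. Qed.

Lemma shadowE k (f : k.-tuple nat -> nat) (pi : 'S_k) l (a : l.-tuple nat) y :
  shadow f pi a y = f [tuple nth 0%N (a ++ y) (pi i) | i < k].
Proof. by rewrite /shadow /fperm; congr f; apply: eq_mktuple => i; rewrite tnth_mktuple. Qed.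

Lemma shadow1 k (f : k.-tuple nat -> nat) y :
  shadow f 1%g [tuple] y = f (tcast (subn0 k) y).
Proof.
rewrite shadowE; congr f; apply: eq_from_tnth => i.
by rewrite tnth_mktuple perm1 tcastE /= (tnth_nth 0%N).
Qed.

Lemma inC_tcast n n' (e : n = n') (g : n.-tuple nat -> nat) (g' : n'.-tuple nat -> nat) :
  (forall y, g y = g' (tcast e y)) -> inC g <-> inC g'.
Proof.
case: n' / e g' => g' gg'.
by have -> : g = g' by apply: funext => y; rewrite gg' tcast_id.
Qed.

Lemma inC_shadow k (f : k.-tuple nat -> nat) (pi : 'S_k) l (a : l.-tuple nat) :
  (l < k)%N -> inC f -> inC (shadow f pi a).
Proof.
move=> lk /inCE [_ Cf]; apply/inCE; split=> [|A dA]; first by rewrite subn_gt0.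
have dAa : zero_density [set v | A v \/ v \in (a : seq nat)].
  have da : zero_density [set v | v \in (a : seq nat)].
    apply: (@zero_density_bounded _ (\max_(v <- a) v).+1) => v va.
    by rewrite ltnS; exact: (@leq_bigmax_seq _ _ _ (fun v => v) v va).
  exact: zero_densityU dA da (fun v => id).
apply: (zero_density_sub (Cf _ dAa)) => v [y [Ay <-]].
rewrite shadowE; eexists; split; last by [].
move=> i; rewrite tnth_mktuple /=.
have : nth 0%N (a ++ y) (pi i) \in (a ++ y : seq nat).
  by apply: mem_nth; rewrite size_cat !size_tuple (subnKC (ltnW lk)).
by rewrite mem_cat => /orP [va | /tnthP [j ->]]; [right | left].
Qed.

Lemma perm_shift k l (sigma : 'S_(k - l)) : (l < k)%N -> exists rho : 'S_k,
  (forall p : 'I_k, (p < l)%N -> rho p = p) /\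
  (forall (p : 'I_k) (q : 'I_(k - l)), p = l + q :> nat -> rho p = l + sigma q :> nat).
Proof.
move=> lk; have kl0 : (0 < k - l)%N by rewrite subn_gt0.
pose q0 : 'I_(k - l) := Ordinal kl0.
pose q_of (p : 'I_k) : 'I_(k - l) := insubd q0 (p - l)%N.
have q_ofE (p : 'I_k) : (l <= p)%N -> q_of p = (p - l)%N :> nat.
  by move=> lp; rewrite insubdK // -topredE /= ltn_sub2rE.
pose rf (p : 'I_k) : 'I_k := insubd p (if (p < l)%N then val p else l + sigma (q_of p))%N.
have rfE p : rf p = (if (p < l)%N then p : nat else l + sigma (q_of p))%N :> nat.
  rewrite insubdK // -topredE /=; case: ifP => _; first exact: ltn_ord.
  by rewrite -ltn_subRL.
have rf_inj : injective rf.
  move=> p p' /(congr1 (@nat_of_ord k)); rewrite !rfE.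
  case: ifPn => pl; case: ifPn => p'l => eq_rf; apply: val_inj => //=.
  - by move: pl p'l eq_rf; lia.
  - by move: pl p'l eq_rf; lia.
  - move: eq_rf => /addnI /val_inj /perm_inj /(congr1 (@nat_of_ord _)).
    by rewrite !q_ofE -?ltnNge //; lia.
exists (perm rf_inj); split=> [p pl | p q pq]; rewrite permE.
  by apply: val_inj => /=; rewrite rfE pl.
rewrite rfE pq ltnNge leq_addr /=; congr (_ + _)%N; congr (val (sigma _)).
by apply: val_inj => /=; rewrite q_ofE pq ?leq_addr // addKn.
Qed.

Lemma shadow_shadow k (f : k.-tuple nat -> nat) (pi : 'S_k) l (a : l.-tuple nat)
    (sigma : 'S_(k - l)) l' (b : l'.-tuple nat) : (l' < k - l)%N ->
  exists pi' : 'S_k, forall y, shadow (shadow f pi a) sigma b y =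
     shadow f pi' [tuple of a ++ b] (tcast (esym (subnDA l k l')) y).
Proof.
move=> l'kl; have lk : (l < k)%N by rewrite -subn_gt0 (leq_ltn_trans _ l'kl).
have [rho [rho_low rho_high]] := perm_shift sigma lk.
exists (pi * rho)%g => y; rewrite !shadowE; congr f; apply: eq_mktuple => i.
rewrite permM /= (val_tcast (esym (subnDA l k l')) y) -catA.
set p := pi i; case: (ltnP p l) => [pl | lp].
  by rewrite rho_low // !nth_cat size_tuple pl.
have pkl : (p - l < k - l)%N by rewrite ltn_sub2rE.
pose q := Ordinal pkl; rewrite (rho_high p q) /= ?subnKC //.
rewrite [LHS]nth_cat size_tuple ltnNge lp /= (_ : (p - l)%N = q) //.
by rewrite (nth_map q) ?size_enum_ord // nth_ord_enum [RHS]nth_cat size_tuple ltnNge leq_addr addKn.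
Qed.

Lemma exists_minimal_shadow k (f : k.-tuple nat -> nat) : (0 < k)%N ->
  ~ inC f -> some_shadow minimal f.
Proof.
move=> k0 nCf.
pose S l := (l < k)%N /\ exists (pi : 'S_k) (a : l.-tuple nat), ~ inC (shadow f pi a).
have S0 : `[< S 0%N >].
  by apply/asboolP; split=> //; exists 1%g, [tuple] => /(inC_tcast (@shadow1 k f)).
have S_le l : `[< S l >] -> (l <= k)%N by move=> /asboolP [/ltnW].
case: (ex_maxnP (ex_intro _ 0%N S0) S_le) => l /asboolP [lk [pi [a nCa]]] l_max.
exists l, pi, a; split=> //; split=> // l' sigma b /andP [l'0 l'kl].
apply: contrapT => nCb; have [pi' shadow_ab] := shadow_shadow f pi a sigma b l'kl.
suff : (l + l' <= l)%N by move: l'0; lia.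
apply: l_max; apply/asboolP; split; first by rewrite -ltn_subRL.
by exists pi', [tuple of a ++ b] => /(inC_tcast shadow_ab).
Qed.

Lemma sum_exp2_bound (c : nat -> nat) r J d :
  (forall i, 2 ^ i * c i <= r)%N -> (2 ^ J * \sum_(J <= i < J + d) c i <= r.*2)%N.
Proof.
move=> c_le; elim: d J => [|d IHd] J; first by rewrite addn0 big_geq // muln0.
rewrite addnS -addSn big_ltn ?leq_addr // mulnDr.
by have := c_le J; have := IHd J.+1; rewrite expnS; nia.
Qed.

Lemma zero_density_sparse_blocks (S : nat -> set nat) (hi : nat -> nat) :
  (forall i x, S i x -> (i <= x < hi i)%N) ->
  (forall i r, 2 ^ i * cnt (S i) r <= r)%N ->
  zero_density [set x | exists i, S i x].
Proof.
(* Blocks below [J] form a bounded set; the blocks from [J] on contribute at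
   most [2r / 2^J] points below [r], and [2^J >= 4 m.+1]. *)
move=> S_block S_sparse m; pose J := m.+2.
pose low := [set x | exists2 i, i \in iota 0 J & S i x].
have d_low : zero_density low.
  apply: zero_density_bigcup => i _; apply: (@zero_density_bounded _ (hi i)) => x.
  by move=> /S_block /andP [].
have [N dN] := d_low m.*2.+1; exists N => r Nr.
pose high := [set x | exists2 i, i \in index_iota J (J + r) & S i x].
have cnt_split : (cnt [set x | exists i, S i x] r <= cnt low r + cnt high r)%N.
  apply: cnt_subU => x xr [i Six]; have := S_block _ _ Six.
  case: (ltnP i J) => iJ i_x; [left | right]; exists i => //.
    by rewrite mem_iota.
  by rewrite mem_index_iota iJ /=; lia.
have high_le : (2 ^ J * cnt high r <= r.*2)%N.
  apply: leq_trans (sum_exp2_bound J r (S_sparse^~ r)).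
  by rewrite leq_mul2l cnt_bigcup orbT.
have J_ge : (4 * m.+1 <= 2 ^ J)%N by rewrite !expnS mulnA leq_mul2l /= ltn_expl.
have := leq_mul J_ge (leqnn (cnt high r)); have := dN r Nr.
have := leq_mul (leqnn m.+1) cnt_split; nia.
Qed.

Lemma ler_nat_div_exp2 (c r i : nat) :
  (c%:R <= r%:R / (2 ^ i)%:R :> rat)%R -> (2 ^ i * c <= r)%N.
Proof. by rewrite ler_pdivlMr ?ltr0n ?expn_gt0 // -natrM ler_nat mulnC. Qed.

Lemma ler_invn_mul (d t c : nat) : (0 < d)%N -> (t <= d * c)%N ->
  (d%:R^-1 * t%:R <= c%:R :> rat)%R.
Proof. by move=> d0; rewrite mulrC ler_pdivrMr ?ltr0n // -natrM ler_nat mulnC. Qed.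

Lemma ltn_truncn_inv (eps : rat) (t c : nat) : (0 < eps)%R -> (0 < t)%N ->
  (eps * t%:R <= c%:R)%R -> (t < (Num.truncn eps^-1).+1 * c)%N.
Proof.
move=> eps0 t0 eps_tc; rewrite -(ltr_nat rat) natrM.
have eps_trunc : (1 < eps * (Num.truncn eps^-1).+1%:R)%R.
  by rewrite -[ltLHS](mulfV (lt0r_neq0 eps0)) ltr_pM2l ?truncnS_gt.
apply: (@lt_le_trans _ _ (eps * t%:R * (Num.truncn eps^-1).+1%:R)%R).
  by rewrite mulrAC -[ltLHS]mul1r ltr_pM2r ?ltr0n.
by rewrite mulrC ler_wpM2l.
Qed.

Lemma bad_notin_C n (g : n.-tuple nat -> nat) : bad g -> ~ inC g.
Proof.
move=> [eps [eps0 badg]] /inCE [_ Cg].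
have /choice [F HF] : forall i, exists p : nat * nat * set nat,
    [/\ (i <= p.1.2)%N, forall x, p.2 x -> (i <= x < p.1.1)%N,
        forall r, (2 ^ i * cnt p.2 r <= r)%N &
        (eps * p.1.2%:R <= (cnt (fimage g p.2) p.1.2)%:R)%R].
  move=> i; have [hi [t [A [_ it A_block A_sparse A_dense]]]] := badg i.
  by exists (hi, t, A); split=> // r; apply: ler_nat_div_exp2.
pose A := [set x | exists i, (F i).2 x].
have dA : zero_density A.
  by apply: (@zero_density_sparse_blocks _ (fun i => (F i).1.1)) => i; have [] := HF i.
have [N dN] := Cg _ dA (Num.truncn eps^-1).
have [Nt _ _ N_dense] := HF N.+1.
have := dN _ (ltnW Nt); rewrite leqNgt => /negP; apply.
apply: leq_trans (ltn_truncn_inv eps0 (leq_trans _ Nt) N_dense) _ => //.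
rewrite leq_mul2l; apply/orP; right; apply: cnt_sub => v _.
by apply: fimage_sub => x Sx; exists N.+1.
Qed.

Lemma fimage_truncate n (g : n.-tuple nat -> nat) (A : set nat) t :
  exists n1, forall n2, (n1 <= n2)%N -> forall v, (v < t)%N ->
    fimage g A v -> fimage g [set x | A x /\ (x < n2)%N] v.
Proof.
elim: t => [|t [n1 IHt]]; first by exists 0%N.
case: (pselect (fimage g A t)) => [[x [Ax gx]] | ngt]; last first.
  by exists n1 => n2 n12 v; rewrite ltnS leq_eqVlt => /orP [/eqP -> | /IHt]; [| apply].
exists (maxn n1 (\max_(j < n) tnth x j).+1) => n2; rewrite geq_max => /andP [n12 xn2] v.
rewrite ltnS leq_eqVlt => /orP [/eqP -> _ | /IHt]; last exact.
exists x; split=> // j; split=> //; apply: leq_trans xn2; rewrite ltnS.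
exact: (@leq_bigmax _ (fun j => tnth x j)).
Qed.

Section MinimalIsBad.
Variables (n : nat) (g : n.-tuple nat -> nat).
Hypothesis proper_shadows_inC : forall (l : nat) (pi : 'S_n) (a : l.-tuple nat),
  (0 < l < n)%N -> inC (shadow g pi a).
Hypothesis n_gt0 : (0 < n)%N.

Lemma zero_density_fimage_fix (A : set nat) (j : 'I_n) c : zero_density A ->
  zero_density [set v | exists x : n.-tuple nat,
                          [/\ forall i, A (tnth x i), tnth x j = c & g x = v]].
Proof.
move=> dA; case: (ltngtP n 1) => [n_lt1 | n_gt1 | n_eq1].
- by have := ltn_ord j; lia.
- (* The set is the image of [A] under the shadow fixing coordinate [j] to [c]. *)
  pose j0 : 'I_n := Ordinal (ltnW n_gt1).
  have /inCE [_ Cg] := @proper_shadows_inC 1 (tperm j0 j) [tuple c] n_gt1.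
  apply: (zero_density_sub (Cg A dA)) => _ [x [Ax xj <-]].
  exists [tuple tnth x (tperm j0 j (insubd j0 p.+1)) | p < n - 1].
  split=> [p | ]; first by rewrite tnth_mktuple.
  rewrite shadowE; congr g; apply: eq_from_tnth => i; rewrite tnth_mktuple.
  set q := tperm j0 j i; have -> : i = tperm j0 j q by rewrite tpermK.
  case: (posnP q) => [q0 | q_gt0].
    by rewrite (_ : q = j0) ?tpermL ?xj //; apply: val_inj.
  have qn : (q.-1 < n - 1)%N by have := ltn_ord q; lia.
  pose p := Ordinal qn; rewrite -(prednK q_gt0) /= (nth_map p) ?size_enum_ord //.
  rewrite (_ : q.-1 = p) // nth_ord_enum.
  by rewrite (_ : insubd j0 p.+1 = q) //; apply: val_inj; rewrite val_insubd /= prednK ?ltn_ord.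
- apply: (@zero_density_bounded _ (g [tuple c | _ < n]).+1) => _ [x [_ xj <-]].
  suff -> : x = [tuple c | _ < n] by [].
  apply: eq_from_tnth => i; rewrite tnth_mktuple -xj; congr tnth.
  by apply: val_inj => /=; have := ltn_ord i; have := ltn_ord j; lia.
Qed.

Lemma zero_density_fimage_low (A : set nat) M : zero_density A ->
  zero_density [set v | exists x : n.-tuple nat,
    [/\ forall i, A (tnth x i), exists j, (tnth x j < M)%N & g x = v]].
Proof.
move=> dA; pose D j c := [set v | exists x : n.-tuple nat,
                                   [/\ forall i, A (tnth x i), tnth x j = c & g x = v]].
pose low j := [set v | exists2 c, c \in iota 0 M & D j c v].
have d_low : zero_density [set v | exists2 j, j \in enum 'I_n & low j v].
  apply: zero_density_bigcup => j _; apply: zero_density_bigcup => c _.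
  exact: zero_density_fimage_fix.
apply: (zero_density_sub d_low) => _ [x [Ax [j xjM] <-]].
exists j; first by rewrite mem_enum.
by exists (tnth x j); [rewrite mem_iota | exists x].
Qed.

Lemma bad_of_notin_C : ~ inC g -> bad g.
Proof.
move=> nCg; have [A [dA ndgA]] : exists A, zero_density A /\ ~ zero_density (fimage g A).
  apply: contrapT => dg; apply: nCg; apply/inCE; split=> // A dA.
  by apply: contrapT => ndgA; apply: dg; exists A.
have [m gA_dense] := not_zero_density ndgA.
exists (m.+1.*2%:R^-1 : rat); split=> [|i]; first by rewrite invr_gt0 ltr0n.
have [M0 A_sparse] := dA (2 ^ i).-1; rewrite prednK ?expn_gt0 // in A_sparse.
pose M := maxn M0 i; pose A' := [set x | A x /\ (M <= x)%N].
pose low := [set v | exists x : n.-tuple nat,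
                       [/\ forall i, A (tnth x i), exists j, (tnth x j < M)%N & g x = v]].
have [N d_low] := zero_density_fimage_low M dA m.*2.+1.
have [t Nt t_dense] := gA_dense (maxn N (maxn i 1)).
have gA_split : (cnt (fimage g A) t <= cnt (fimage g A') t + cnt low t)%N.
  apply: cnt_subU => _ _ [x [Ax <-]].
  case: (pselect (exists j, tnth x j < M)%N) => [x_low | /forallNP x_high].
    by right; exists x.
  by left; exists x; split=> // j; split=> //; rewrite leqNgt; apply/negP/x_high.
have [n1 gA'_trunc] := fimage_truncate g A' t.
pose hi := maxn n1 i.
exists hi, t, [set x | A' x /\ (x < hi)%N]; split.
- exact: leq_maxr.
- by move: Nt; rewrite !geq_max => /and3P [].
- move=> x [[_ Mx] xhi]; rewrite xhi andbT.
  exact: leq_trans (leq_maxr _ _) Mx.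
- move=> r; rewrite ler_pdivlMr ?ltr0n ?expn_gt0 // -natrM ler_nat mulnC.
  case: (leqP r M) => rM.
    suff -> : cnt [set x | A' x /\ (x < hi)%N] r = 0%N by rewrite muln0.
    apply/eqP; rewrite -leqn0 -(cnt_set0 r); apply: cnt_sub => v vr [[_ Mv] _].
    by move: vr Mv rM; lia.
  apply: leq_trans (A_sparse r _); last by move: rM; lia.
  by rewrite leq_mul2l cnt_sub ?orbT // => v _ [[]].
- apply: ler_invn_mul => //; apply: leq_trans (_ : m.+1.*2 * cnt (fimage g A') t <= _)%N.
    have := d_low t (leq_trans (leq_maxl _ _) Nt); rewrite -/low.
    have := leq_mul (leqnn m.+1) gA_split; nia.
  by rewrite leq_mul2l cnt_sub ?orbT // => v vt; apply: gA'_trunc; first exact: leq_maxl.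
Qed.

End MinimalIsBad.

Theorem mainTheorem6 (k : nat) (hk : (1 <= k)%N) (f : k.-tuple nat -> nat) :
  (~ inC f <-> some_shadow minimal f) /\
  (~ inC f <-> some_shadow bad f) /\
  (~ inC f <-> some_shadow (fun n g => ~ inC g) f).
Proof.
have to_minimal : ~ inC f -> some_shadow minimal f := exists_minimal_shadow hk.
have from_shadow : some_shadow (fun n g => ~ inC g) f -> ~ inC f.
  by move=> [l [pi [a [lk nCs]]]] Cf; apply/nCs/inC_shadow.
have minimal_bad l (pi : 'S_k) (a : l.-tuple nat) :
    (l < k)%N -> minimal (shadow f pi a) -> bad (shadow f pi a).
  by move=> lk [nCs proper]; apply: (bad_of_notin_C proper); rewrite ?subn_gt0.
split; [|split]; split.
- exact: to_minimal.
- by move=> [l [pi [a [lk [nCs _]]]]]; apply: from_shadow; exists l, pi, a.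
- by move/to_minimal => [l [pi [a [lk ms]]]]; exists l, pi, a; split; last exact: minimal_bad.
- by move=> [l [pi [a [lk /bad_notin_C nCs]]]]; apply: from_shadow; exists l, pi, a.
- by move/to_minimal => [l [pi [a [lk [nCs _]]]]]; exists l, pi, a.
- exact: from_shadow.
Qed.
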